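(* Let $m\ge 2$ be an integer and consider a preferential (dynamic) attachment circuit of index $m$. Let $Y_n^{(0)}$ and $Y_n^{(1)}$ be the numbers of nodes of outdegree $0$ and of outdegree $1$ in the circuit after $n$ insertions. Then for every $n\ge 1$, $$\mathbb{E}[Y_n^{(0)}]=\frac{(m+1)n+m}{2m+1},\qquad \mathbb{E}[Y_n^{(1)}]=\frac{(m+1)(n-1)\bigl((2m^2+2m)n+2m^2+m+1\bigr)}{2(3m+1)(2m+1)\bigl((m+1)n-1\bigr)},$$ and consequently, as $n\to\infty$, $\mathbb{E}[Y_n^{(0)}]\sim \frac{m+1}{2m+1}\,n$ and $\mathbb{E}[Y_n^{(1)}]\sim \frac{m(m+1)}{(3m+1)(2m+1)}\,n$.
   Context: Preferential (dynamic) attachment circuit of index $m\ge1$: at time $0$ there is a single node labeled $0$. At each time $n\ge1$ a new node labeled $n$ is added and $m$ parents are chosen for it one at a time, with replacement, among nodes $0,\dots,n-1$. Before the $(i+1)$-th choice ($i=0,\dots,m-1$), each existing node $v$ is chosen with probability $\frac{d_i(v)+1}{\sum_{x}(d_i(x)+1)}$, where $d_i(x)$ is the outdegree of $x$ in the current multigraph, which already includes the edges created by the first $i$ choices for node $n$; after each choice an edge from the chosen parent to node $n$ is immediately added (multiple edges between the same pair are allowed and counted with multiplicity). The outdegree of a node is the number of edges (with multiplicity) going to nodes with larger labels. *)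

From HB Require Import structures.
From mathcomp Require Import all_boot all_order all_algebra.
From mathcomp Require Import all_classical all_reals all_analysis.
Set Implicit Arguments. Unset Strict Implicit. Unset Printing Implicit Defensive.
Import Order.TTheory GRing.Theory Num.Theory.
Local Open Scope ring_scope.

(* A state of the circuit is the sequence of outdegrees d = [:: d(0); ...; d(n)]
   of the nodes 0..n.  A (finitely supported) probability distribution over
   states is a list of (state, probability) pairs; repetitions are allowed
   and their masses add up. *)
Definition dist (R : numFieldType) := seq (seq nat * R).

Definition dbind (R : numFieldType) (D : dist R) (K : seq nat -> dist R) : dist R :=
  flatten [seq [seq (t.1, sp.2 * t.2) | t <- K sp.1] | sp <- D].

(* One parent choice: node v (among the existing nodes 0..size d - 1) is
   chosen with probability (d(v)+1) / sum_x (d(x)+1), and its outdegree is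
   incremented (the edge from v to the new node is added immediately). *)
Definition choose_parent (R : numFieldType) (d : seq nat) : dist R :=
  [seq (incr_nth d v, (nth 0%N d v).+1%:R / (sumn d + size d)%:R)
  | v <- iota 0 (size d)].

Definition insert_node (R : numFieldType) (m : nat) (d : seq nat) : dist R :=
  dbind (iter m (fun D => dbind D (@choose_parent R)) [:: (d, 1)])
        (fun d' => [:: (rcons d' 0%N, 1)]).

Fixpoint pa_dist (R : numFieldType) (m n : nat) : dist R :=
  match n with
  | 0 => [:: ([:: 0%N], 1)]
  | n'.+1 => dbind (pa_dist R m n') (insert_node R m)
  end.

Definition nodes_outdeg (k : nat) (d : seq nat) : nat := count (pred1 k) d.

Definition EY (R : numFieldType) (m k n : nat) : R :=
  \sum_(sp <- pa_dist R m n) sp.2 * (nodes_outdeg k sp.1)%:R.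

From HB Require Import structures.
From mathcomp Require Import all_boot all_order all_algebra.
From mathcomp Require Import all_classical all_reals all_analysis.
From mathcomp Require Import ring lra zify.
Import Order.TTheory GRing.Theory Num.Theory.
Import numFieldNormedType.Exports.
Local Open Scope classical_set_scope.
Local Open Scope ring_scope.

(* With the weight W = sum_x (d(x) + 1) of a state d, one parent choice hits
   the c_k nodes of outdegree k with total probability (k + 1) c_k / W and
   raises the outdegree of the chosen node, so that
     E[c_k'] = (1 - (k + 1) / W) c_k + k / W c_(k-1),
   while W grows by exactly one.  Over the m choices of an insertion these
   factors telescope, and since the weight after n insertions is the
   deterministic number (m + 1) n + 1, the expectations of Y_n^(0) and Y_n^(1)
   satisfy first-order linear recurrences in n, solved by the closed forms.
   The normalised expectations are rational functions of 1 / (n + 1), whence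
   the limits. *)

Definition expect {R : numFieldType} (D : dist R) (f : seq nat -> R) : R :=
  \sum_(sp <- D) sp.2 * f sp.1.

Definition dall {R : numFieldType} (D : dist R) (P : seq nat -> Prop) :=
  forall sp, sp \in D -> P sp.1.

Definition weight (d : seq nat) : nat := sumn d + size d.

Definition choices (R : numFieldType) (i : nat) (d : seq nat) : dist R :=
  iter i (fun D => dbind D (@choose_parent R)) [:: (d, 1)].

Local Notation cnt k := (fun s => (nodes_outdeg k s)%:R).

Section Distributions.
Context {R : numFieldType}.
Implicit Types (D : dist R) (K : seq nat -> dist R) (f g h : seq nat -> R).

Lemma expect_seq1 d f : expect [:: (d, 1)] f = f d.
Proof. by rewrite /expect big_seq1 mul1r. Qed.

Lemma expect_dbind D K f :
  expect (dbind D K) f = expect D (fun s => expect (K s) f).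
Proof.
rewrite /expect /dbind big_flatten /= big_map; apply: eq_bigr => sp _.
by rewrite big_map big_distrr; apply: eq_bigr => t _ /=; rewrite mulrA.
Qed.

Lemma expect_lin D f g a b c :
  expect D (fun s => a * f s + b * g s + c) =
  a * expect D f + b * expect D g + c * expect D (fun=> 1).
Proof. by rewrite /expect !big_distrr -!big_split; apply: eq_bigr => sp _ /=; ring. Qed.

Lemma dall_dbind {D K} {P Q : seq nat -> Prop} :
  dall D P -> (forall s, P s -> dall (K s) Q) -> dall (dbind D K) Q.
Proof.
move=> DP KQ _ /flattenP[_ /mapP[sp spD ->]] /mapP[t tK ->].
exact: KQ (DP _ spD) _ tK.
Qed.

Lemma dall_seq1 {d} {P : seq nat -> Prop} : P d -> dall [:: (d, 1 : R)] P.
Proof. by move=> Pd sp; rewrite mem_seq1 => /eqP ->. Qed.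

Lemma eq_expect_in {D} {P : seq nat -> Prop} {f g} :
  dall D P -> (forall s, P s -> f s = g s) -> expect D f = expect D g.
Proof. by move=> DP fg; rewrite /expect !big_seq; apply: eq_bigr => sp /DP /fg ->. Qed.

Lemma expect_dbind_lin {D K} {P : seq nat -> Prop} {f} g h a b c :
  dall D P -> (forall s, P s -> expect (K s) f = a * g s + b * h s + c) ->
  expect (dbind D K) f = a * expect D g + b * expect D h + c * expect D (fun=> 1).
Proof.
by move=> DP KP; rewrite expect_dbind -expect_lin; apply: eq_expect_in DP KP.
Qed.

Lemma expect_dbind_mass {D K} {P : seq nat -> Prop} :
  dall D P -> (forall s, P s -> expect (K s) (fun=> 1) = 1) ->
  expect D (fun=> 1) = 1 -> expect (dbind D K) (fun=> 1) = 1.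
Proof. by move=> DP KP; rewrite expect_dbind (eq_expect_in DP KP). Qed.

End Distributions.

Section ChooseParent.
Context {R : numFieldType}.
Implicit Types (d : seq nat) (k v : nat).

Lemma weight_incr_nth d v : (v < size d)%N -> weight (incr_nth d v) = (weight d).+1.
Proof.
rewrite /weight size_incr_nth => lt_v; rewrite lt_v -addSn; congr (_ + _)%N.
by elim: d v lt_v => [|x d IH] [|v] //= /IH ->; rewrite addnS.
Qed.

Lemma count_incr_nth k d v : (v < size d)%N ->
  (count (pred1 k) (incr_nth d v) + (nth 0 d v == k) =
   count (pred1 k) d + ((nth 0 d v).+1 == k))%N.
Proof. by elim: d v => [|x d IH] [|v] //= => [_|/IH]; [lia | rewrite -!addnA => ->]. Qed.

Lemma choose_parent_weight d :
  dall (choose_parent R d) (fun s => weight s = (weight d).+1).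
Proof.
by move=> sp /mapP[v]; rewrite mem_iota => /andP[_ lt_v] ->; exact: weight_incr_nth.
Qed.

Lemma natr_weight d : (weight d)%:R = \sum_(x <- d) x.+1%:R :> R.
Proof.
rewrite /weight; elim: d => [|x d IH]; first by rewrite big_nil.
by rewrite big_cons -IH -natrD /= addnS addSn addnA.
Qed.

Lemma sum_pred1_seq d k (F : nat -> R) :
  \sum_(x <- d) (x == k)%:R * F x = (count (pred1 k) d)%:R * F k.
Proof.
elim: d => [|x d IH]; first by rewrite big_nil mul0r.
by rewrite big_cons IH /= natrD mulrDl; case: eqP => [->|_] //=; rewrite !mul0r.
Qed.

Lemma sum_iota_nth d (F : nat -> R) :
  \sum_(v <- iota 0 (size d)) F (nth 0 d v) = \sum_(x <- d) F x.
Proof. by rewrite [RHS](big_nth 0%N) /index_iota subn0. Qed.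

Lemma expect_choose_parent_mass d : (0 < weight d)%N ->
  expect (choose_parent R d) (fun=> 1) = 1.
Proof.
move=> d_gt0; rewrite /expect big_map.
under eq_bigr do rewrite mulr1.
rewrite -big_distrl (sum_iota_nth d (fun x => x.+1%:R)) -natr_weight.
by apply: mulfV; rewrite pnatr_eq0 -lt0n.
Qed.

Lemma expect_choose_parent d k : (0 < weight d)%N ->
  expect (choose_parent R d) (cnt k) =
  (1 - k.+1%:R / (weight d)%:R) * (nodes_outdeg k d)%:R
  + k%:R / (weight d)%:R * (nodes_outdeg k.-1 d)%:R.
Proof.
move=> d_gt0; set W := (weight d)%:R; rewrite /nodes_outdeg; set c := (count (pred1 k) d)%:R.
have W_neq0 : W != 0 by rewrite pnatr_eq0 -lt0n.
have count_incr v : (v < size d)%N -> (count (pred1 k) (incr_nth d v))%:R =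
    c + ((nth 0 d v).+1 == k)%:R - (nth 0 d v == k)%:R.
  move=> /(count_incr_nth k)/(congr1 (fun n => n%:R : R)).
  by rewrite !natrD => /(canRL (addrK _)).
rewrite /expect big_map big_seq.
under eq_bigr => v /[!mem_iota] /= /count_incr -> do rewrite -/W.
rewrite -big_seq (sum_iota_nth d (fun x => x.+1%:R / W * (c + (x.+1 == k)%:R - (x == k)%:R))).
have succ_eqk : \sum_(x <- d) (x.+1 == k)%:R * x.+1%:R = k%:R * (count (pred1 k.-1) d)%:R :> R.
  case: (k) => [|k'] /=; first by rewrite !mul0r big1 // => x _; rewrite mul0r.
  by under eq_bigr do rewrite eqSS; rewrite sum_pred1_seq mulrC.
have -> : \sum_(x <- d) x.+1%:R / W * (c + (x.+1 == k)%:R - (x == k)%:R) =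
    W^-1 * (c * \sum_(x <- d) x.+1%:R + \sum_(x <- d) (x.+1 == k)%:R * x.+1%:R
            - \sum_(x <- d) (x == k)%:R * x.+1%:R).
  by rewrite !mulr_sumr -big_split -sumrB mulr_sumr; apply: eq_bigr => x _ /=; ring.
by rewrite succ_eqk sum_pred1_seq -natr_weight; field.
Qed.

End ChooseParent.

Section Choices.
Context {R : numFieldType}.
Implicit Types (d : seq nat) (i : nat).

Lemma choicesS i d : choices R i.+1 d = dbind (choices R i d) (@choose_parent R).
Proof. by []. Qed.

Lemma choices_weight i d : dall (choices R i d) (fun s => weight s = weight d + i)%N.
Proof.
elim: i => [|i IH]; first by apply: dall_seq1; rewrite addn0.
by apply: dall_dbind IH _ => s ws t /choose_parent_weight ->; rewrite ws addnS.
Qed.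

Lemma choices_weight_gt0 {i d s} :
  (0 < weight d)%N -> weight s = (weight d + i)%N -> (0 < weight s)%N.
Proof. by move=> d_gt0 ->; rewrite addn_gt0 d_gt0. Qed.

Lemma choices_mass i {d} : (0 < weight d)%N -> expect (choices R i d) (fun=> 1) = 1.
Proof.
move=> d_gt0; elim: i => [|i IH]; first exact: expect_seq1.
rewrite choicesS; apply: expect_dbind_mass (choices_weight i d) _ IH => s ws.
exact: expect_choose_parent_mass (choices_weight_gt0 d_gt0 ws).
Qed.

Lemma choices_deg0 i {d} : (0 < weight d)%N ->
  expect (choices R i d) (cnt 0) * ((weight d)%:R + i%:R - 1) =
  (nodes_outdeg 0 d)%:R * ((weight d)%:R - 1).
Proof.
move=> d_gt0; set w := (weight d)%:R; elim: i => [|i IH]; first by rewrite expect_seq1 addr0.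
have wi_neq0 : w + i%:R != 0 by rewrite -natrD pnatr_eq0 -lt0n addn_gt0 d_gt0.
rewrite choicesS (expect_dbind_lin (cnt 0) (cnt 0) ((w + i%:R - 1) / (w + i%:R)) 0 0
                    (choices_weight i d)).
  by rewrite -IH -natr1; field.
move=> s ws; rewrite expect_choose_parent ?(choices_weight_gt0 d_gt0 ws) //.
by rewrite ws natrD; field.
Qed.

Lemma choices_deg1 i {d} : (0 < weight d)%N ->
  expect (choices R i d) (cnt 1) * (((weight d)%:R + i%:R - 2) * ((weight d)%:R + i%:R - 1)) =
  (nodes_outdeg 1 d)%:R * (((weight d)%:R - 2) * ((weight d)%:R - 1))
  + i%:R * (nodes_outdeg 0 d)%:R * ((weight d)%:R - 1).
Proof.
move=> d_gt0; set w := (weight d)%:R; elim: i => [|i IH]; first by rewrite expect_seq1; ring.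
have wi_neq0 : w + i%:R != 0 by rewrite -natrD pnatr_eq0 -lt0n addn_gt0 d_gt0.
rewrite choicesS (expect_dbind_lin (cnt 0) (cnt 1) (w + i%:R)^-1 (1 - 2 / (w + i%:R)) 0
                    (choices_weight i d)).
  have -> : (nodes_outdeg 1 d)%:R * ((w - 2) * (w - 1))
            + i.+1%:R * (nodes_outdeg 0 d)%:R * (w - 1) =
      expect (choices R i d) (cnt 1) * ((w + i%:R - 2) * (w + i%:R - 1))
      + expect (choices R i d) (cnt 0) * (w + i%:R - 1).
    by rewrite IH choices_deg0 // -natr1; ring.
  by rewrite -natr1; field.
move=> s ws; rewrite expect_choose_parent ?(choices_weight_gt0 d_gt0 ws) //.
by rewrite ws natrD; field.
Qed.

End Choices.

Lemma nodes_outdeg_rcons0 k t : nodes_outdeg k (rcons t 0) = (nodes_outdeg k t + (0 == k))%N.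
Proof. by rewrite /nodes_outdeg -cats1 count_cat /= addn0. Qed.

Section InsertNode.
Context {R : realFieldType}.
Variables (m : nat) (s : seq nat).
Hypothesis s_gt0 : (0 < weight s)%N.

Lemma insert_nodeE :
  insert_node R m s = dbind (choices R m s) (fun t => [:: (rcons t 0%N, 1)]).
Proof. by []. Qed.

Lemma insert_node_weight : dall (insert_node R m s) (fun t => weight t = weight s + m.+1)%N.
Proof.
apply: dall_dbind (choices_weight m s) _ => t wt; apply: dall_seq1.
by move: wt; rewrite /weight sumn_rcons size_rcons; lia.
Qed.

Lemma insert_node_mass : expect (insert_node R m s) (fun=> 1) = 1.
Proof.
rewrite insert_nodeE; apply: expect_dbind_mass (choices_weight m s) _ (choices_mass m s_gt0).
by move=> t _; rewrite expect_seq1.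
Qed.

Local Notation u := ((weight s).-1%:R : R).

Lemma insert_node_deg0 : (0 < m)%N ->
  expect (insert_node R m s) (cnt 0) = u / (u + m%:R) * (nodes_outdeg 0 s)%:R + 1.
Proof.
move=> m_gt0; have w_u : (weight s)%:R = u + 1 by rewrite natr1 prednK.
rewrite insert_nodeE (expect_dbind_lin (cnt 0) (cnt 0) 1 0 1 (choices_weight m s)); last first.
  by move=> t _; rewrite expect_seq1 nodes_outdeg_rcons0 natrD /=; ring.
have u_ge0 : 0 <= u by [].
have m_ge1 : 1 <= m%:R :> R by rewrite ler1n.
have um_neq0 : u + m%:R != 0 by apply: lt0r_neq0; lra.
have X_neq0 : u + 1 + m%:R - 1 != 0 by apply: lt0r_neq0; lra.
have := choices_deg0 (R := R) m s_gt0; rewrite w_u => deg0.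
rewrite choices_mass // -[expect _ (cnt 0)](mulfK X_neq0) deg0.
by field; rewrite um_neq0.
Qed.

Lemma insert_node_deg1 : (1 < m)%N ->
  expect (insert_node R m s) (cnt 1) =
  m%:R * u / ((u + m%:R - 1) * (u + m%:R)) * (nodes_outdeg 0 s)%:R
  + (u - 1) * u / ((u + m%:R - 1) * (u + m%:R)) * (nodes_outdeg 1 s)%:R.
Proof.
move=> m_gt1; have w_u : (weight s)%:R = u + 1 by rewrite natr1 prednK.
rewrite insert_nodeE (expect_dbind_lin (cnt 0) (cnt 1) 0 1 0 (choices_weight m s)); last first.
  by move=> t _; rewrite expect_seq1 nodes_outdeg_rcons0 addn0; ring.
have u_ge0 : 0 <= u by [].
have m_ge2 : 2 <= m%:R :> R by rewrite (ler_nat R 2 m).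
have um_neq0 : u + m%:R != 0 by apply: lt0r_neq0; lra.
have um1_neq0 : u + m%:R - 1 != 0 by apply: lt0r_neq0; lra.
have X_neq0 : (u + 1 + m%:R - 2) * (u + 1 + m%:R - 1) != 0.
  by rewrite mulf_neq0 //; apply: lt0r_neq0; lra.
have := choices_deg1 (R := R) m s_gt0; rewrite w_u => deg1.
rewrite -[expect _ (cnt 1)](mulfK X_neq0) deg1.
by field; rewrite um_neq0 um1_neq0.
Qed.

End InsertNode.

Section Circuit.
Context {R : realFieldType}.
Variable m : nat.

Lemma pa_dist_weight n : dall (pa_dist R m n) (fun s => weight s = (m.+1 * n).+1)%N.
Proof.
elim: n => [|n IH]; first by apply: dall_seq1; rewrite muln0.
by apply: dall_dbind IH _ => s ws t /insert_node_weight ->; rewrite ws; lia.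
Qed.

Lemma pa_dist_mass n : expect (pa_dist R m n) (fun=> 1) = 1.
Proof.
elim: n => [|n IH]; first exact: expect_seq1.
apply: expect_dbind_mass (pa_dist_weight n) _ IH => s ws.
by apply: insert_node_mass; rewrite ws.
Qed.

Lemma EY_expect k n : EY R m k n = expect (pa_dist R m n) (cnt k).
Proof. by []. Qed.

Lemma EY0_succ n : (0 < m)%N ->
  let N := (m.+1 * n)%:R in
  EY R m 0 n.+1 = N / (N + m%:R) * EY R m 0 n + 1.
Proof.
move=> m_gt0 N; rewrite !EY_expect.
rewrite (expect_dbind_lin (cnt 0) (cnt 0) (N / (N + m%:R)) 0 1 (pa_dist_weight n)).
  by rewrite pa_dist_mass; ring.
by move=> s ws; rewrite insert_node_deg0 ?ws //=; ring.
Qed.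

Lemma EY1_succ n : (1 < m)%N ->
  let N := (m.+1 * n)%:R in
  EY R m 1 n.+1 = m%:R * N / ((N + m%:R - 1) * (N + m%:R)) * EY R m 0 n
                  + (N - 1) * N / ((N + m%:R - 1) * (N + m%:R)) * EY R m 1 n.
Proof.
move=> m_gt1 N; rewrite !EY_expect.
rewrite (expect_dbind_lin (cnt 0) (cnt 1) (m%:R * N / ((N + m%:R - 1) * (N + m%:R)))
  ((N - 1) * N / ((N + m%:R - 1) * (N + m%:R))) 0 (pa_dist_weight n)).
  by rewrite pa_dist_mass; ring.
by move=> s ws; rewrite insert_node_deg1 ?ws //=; ring.
Qed.

End Circuit.

Definition mean_deg0 {R : fieldType} (M x : R) : R := ((M + 1) * x + M) / (2 * M + 1).

Definition mean_deg1 {R : fieldType} (M x : R) : R :=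
  (M + 1) * (x - 1) * ((2 * M ^+ 2 + 2 * M) * x + 2 * M ^+ 2 + M + 1)
  / (2 * (3 * M + 1) * (2 * M + 1) * ((M + 1) * x - 1)).

Section ClosedForms.
Context {R : realFieldType}.
Variable m : nat.

Lemma EY0_closed n : (0 < m)%N -> EY R m 0 n.+1 = mean_deg0 m%:R n.+1%:R.
Proof.
move=> m_gt0; have M_ge1 : 1 <= m%:R :> R by rewrite ler1n.
elim: n => [|n IH]; rewrite EY0_succ // ?IH.
  by rewrite EY_expect expect_seq1 /mean_deg0 muln0 !mul0r add0r; field; apply: lt0r_neq0; lra.
rewrite /mean_deg0 natrM -natr1 -[n.+2%:R]natr1.
have x_ge1 : 1 <= n.+1%:R :> R by rewrite ler1n.
by field; rewrite !lt0r_neq0 //; nra.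
Qed.

Lemma EY1_closed n : (1 < m)%N -> EY R m 1 n.+1 = mean_deg1 m%:R n.+1%:R.
Proof.
move=> m_gt1; have M_ge2 : 2 <= m%:R :> R by rewrite (ler_nat R 2 m).
elim: n => [|n IH]; rewrite EY1_succ //.
  by rewrite /mean_deg1 muln0 subrr !(mulr0, mul0r, add0r).
rewrite IH EY0_closed ?(ltnW m_gt1) // /mean_deg0 /mean_deg1 natrM -natr1 -[n.+2%:R]natr1.
have x_ge1 : 1 <= n.+1%:R :> R by rewrite ler1n.
by field; rewrite !lt0r_neq0 //; nra.
Qed.

End ClosedForms.

Section Asymptotics.
Context {R : realFieldType}.
Implicit Types M x : R.

Lemma mean_deg0_ratio M x : 0 <= M -> x != 0 ->
  mean_deg0 M x / ((M + 1) / (2 * M + 1) * x) = 1 + M / (M + 1) * x^-1.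
Proof.
by move=> M_ge0 x_neq0; rewrite /mean_deg0; field; rewrite x_neq0 !lt0r_neq0 //; lra.
Qed.

Lemma mean_deg1_ratio M x : 0 < M -> 1 <= x ->
  mean_deg1 M x / (M * (M + 1) / ((3 * M + 1) * (2 * M + 1)) * x) =
  (1 - x^-1) * (1 + (2 * M ^+ 2 + M + 1) / (2 * M * (M + 1)) * x^-1)
  / (1 - (M + 1)^-1 * x^-1).
Proof.
move=> M_gt0 x_ge1; rewrite /mean_deg1; field.
by rewrite !lt0r_neq0 //; nra.
Qed.

End Asymptotics.

Section Limits.
Context {R : realType}.
Variable u : R^nat.
Hypothesis u0 : u @ \oo --> 0.

Lemma cvg_affine_1 a : (fun n => 1 + a * u n) @ \oo --> (1 : R).
Proof.
rewrite -[X in _ --> X](_ : 1 + a * 0 = 1 :> R); last by rewrite mulr0 addr0.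
by apply: cvgD; [exact: cvg_cst | apply: cvgM; [exact: cvg_cst | exact: u0]].
Qed.

Lemma cvg_ratio_1 a b :
  (fun n => (1 - u n) * (1 + a * u n) / (1 - b * u n)) @ \oo --> (1 : R).
Proof.
have cvg_1B c : (fun n => 1 - c * u n) @ \oo --> (1 : R).
  rewrite -[X in _ --> X](_ : 1 - c * 0 = 1 :> R); last by rewrite mulr0 subr0.
  by apply: cvgB; [exact: cvg_cst | apply: cvgM; [exact: cvg_cst | exact: u0]].
rewrite -[X in _ --> X](_ : 1 * 1 / 1 = 1 :> R); last by rewrite invr1 !mulr1.
apply: cvgM; last by apply: cvgV; [exact: oner_neq0 | exact: cvg_1B].
apply: cvgM; last exact: cvg_affine_1.
by under eq_fun do rewrite -[u _]mul1r; exact: cvg_1B.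
Qed.

End Limits.

Theorem proposition1 (R : realType) (m : nat) (hm : (2 <= m)%N) :
  (forall n : nat, (1 <= n)%N ->
     EY R m 0 n = ((m + 1) * n + m)%:R / (2 * m + 1)%:R /\
     EY R m 1 n =
       ((m + 1) * (n - 1) * ((2 * m ^ 2 + 2 * m) * n + 2 * m ^ 2 + m + 1))%:R
       / (2 * (3 * m + 1) * (2 * m + 1) * ((m + 1) * n - 1))%:R) /\
  (((fun n : nat => EY R m 0 n / ((m + 1)%:R / (2 * m + 1)%:R * n%:R)) @ \oo) --> (1 : R)) /\
  (((fun n : nat => EY R m 1 n /
       ((m * (m + 1))%:R / ((3 * m + 1) * (2 * m + 1))%:R * n%:R)) @ \oo) --> (1 : R)).
Proof.
have m_gt0 : (0 < m)%N := ltnW hm.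
split; [case=> [//|n] _; split | split].
- by rewrite EY0_closed // /mean_deg0 !(natrD, natrM).
- rewrite EY1_closed // /mean_deg1 !natrM !natrB ?muln_gt0 ?addn_gt0 ?orbT //.
  by rewrite !(natrD, natrM, natrX).
- rewrite -cvg_shiftS
    [X in X @ \oo --> _](_ : _ = fun n => 1 + m%:R / (m%:R + 1) * harmonic n).
    exact (cvg_affine_1 _ cvg_harmonic _).
  by apply/funext => n /=; rewrite EY0_closed // !(natrD, natrM) mean_deg0_ratio.
- rewrite -cvg_shiftS [X in X @ \oo --> _](_ : _ = fun n => (1 - harmonic n) *
    (1 + (2 * m%:R ^+ 2 + m%:R + 1) / (2 * m%:R * (m%:R + 1)) * harmonic n)
    / (1 - (m%:R + 1)^-1 * harmonic n)).
    exact (cvg_ratio_1 _ cvg_harmonic _ _).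
  apply/funext => n /=.
  by rewrite EY1_closed // !(natrD, natrM) mean_deg1_ratio // ?ltr0n // ler1n.
Qed.
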